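(* Let $N$ be a non-orientable $3$-manifold triangulated by finitely many ideal hyperbolic tetrahedra $A_i$. The triangulation bestows a hyperbolic structure around the edge cycle $[e]=\{e_{i_1,j_1},\dots,e_{i_n,j_n}\}$ if and only if $$\prod_{l=1}^n \frac{z(e_{i_l,j_l})^{\epsilon_l}}{\overline{z(e_{i_l,j_l})}^{\,1-\epsilon_l}}=1\qquad\text{and}\qquad \sum_{l=1}^n\arg\big(z(e_{i_l,j_l})\big)=2\pi,$$ where $z(e_{i_l,j_l})$ is the edge invariant of $e_{i_l,j_l}$ and $\epsilon_l\in\{0,1\}$ is such that, in the gluing around $[e]$, a coherent orientation of the tetrahedra is obtained by gluing a copy of $A_{i_l}$ with its orientation reversed if $\epsilon_l=0$ and with its original orientation if $\epsilon_l=1$, with the orientation of $A_{i_1}$ kept as given.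
   Context: An ideal tetrahedron is a geodesic tetrahedron in $\mathbb{H}^3$ with all vertices on $\partial_\infty\mathbb{H}^3=\mathbb{C}\cup\{\infty\}$. After an orientation-preserving isometry (with respect to the given orientation of the tetrahedron) its vertices are $0,1,\infty,z$, and the edge from $z$ to $\infty$ has edge invariant $z$. An edge cycle is the set of edges of tetrahedra identified to a single edge of $N$. *)

From Stdlib Require Import Reals Lra Arith.
From Coquelicot Require Import Coquelicot.
Open Scope R_scope.

(** * The sphere at infinity  dH^3 = C u {oo}, in homogeneous coordinates.
    A point is a nonzero pair (p1,p2) : C*C up to scaling; (z,1) is z and
    (1,0) is oo. *)
Definition Pt := (C * C)%type.
Definition nonzero_pt (p : Pt) : Prop := fst p <> 0%C \/ snd p <> 0%C.
Definition det2 (p q : Pt) : C := (fst p * snd q - snd p * fst q)%C.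
Definition same_pt (p q : Pt) : Prop := det2 p q = 0%C.

(** cross ratio, normalised so that cr 0 oo 1 z = z *)
Definition cr (a b c d : Pt) : C :=
  ((det2 d a * det2 c b) / (det2 d b * det2 c a))%C.

(** * Isometries of H^3, acting on the sphere at infinity (Poincare extension):
    w |-> M w  (Moebius, orientation preserving) or  w |-> M conj(w)
    (anti-Moebius, orientation reversing), M an invertible 2x2 complex matrix. *)
Record isom := Isom {
  im_a : C; im_b : C; im_c : C; im_d : C;
  im_rev : bool
}.
Definition isom_ok (g : isom) : Prop :=
  (im_a g * im_d g - im_b g * im_c g)%C <> 0%C.
Definition orientation_preserving (g : isom) : bool := negb (im_rev g).
Definition act (g : isom) (p : Pt) : Pt :=
  let p' := if im_rev g then (Cconj (fst p), Cconj (snd p)) else p in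
  ((im_a g * fst p' + im_b g * snd p')%C, (im_c g * fst p' + im_d g * snd p')%C).

(** * Ideal tetrahedra: four distinct ideal points not on a common circle
    (i.e. non-degenerate). They are regarded as oriented by the orientation
    of H^3. *)
Definition ideal_tetra (v0 v1 v2 v3 : Pt) : Prop :=
  nonzero_pt v0 /\ nonzero_pt v1 /\ nonzero_pt v2 /\ nonzero_pt v3 /\
  ~ same_pt v0 v1 /\ ~ same_pt v0 v2 /\ ~ same_pt v0 v3 /\
  ~ same_pt v1 v2 /\ ~ same_pt v1 v3 /\ ~ same_pt v2 v3 /\
  Im (cr v0 v1 v2 v3) <> 0.

(** Edge invariant of the edge {a,b} of the (positively oriented) ideal
    tetrahedron with vertices a,b,c,d: the z such that an orientation
    preserving isometry sends a,b to 0,oo and the remaining two vertices to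
    1 and z, with (0,oo,1,z) positively oriented, i.e. Im z > 0. *)
Definition edge_inv (a b c d : Pt) : C :=
  if Rlt_dec 0 (Im (cr a b c d)) then cr a b c d else Cinv (cr a b c d).

(** principal argument, in (-PI, PI] *)
Definition arg (z : C) : R :=
  if Rle_dec 0 (Im z) then acos (Re z / Cmod z) else - acos (Re z / Cmod z).

(** Dihedral angle at the edge {a,b} of the ideal tetrahedron a,b,c,d:
    move a,b to 0,oo by the isometry w |-> (w-a)/(w-b); the two faces through
    the edge become vertical half-planes over the rays from 0 through the
    images p,q of c,d, and the dihedral angle is the angle between p and q. *)
Definition dihedral (a b c d : Pt) : R :=
  let p := (det2 c a / det2 c b)%C in
  let q := (det2 d a / det2 d b)%C in
  acos (Re (p * Cconj q) / (Cmod p * Cmod q)).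

(** x and y lie on opposite sides of the hyperbolic plane spanned by the
    ideal triangle p,q,r (= opposite sides of the circle through p,q,r). *)
Definition opposite_sides (p q r x y : Pt) : Prop :=
  Im (cr p q r x) * Im (cr p q r y) < 0.

Fixpoint Rsum (n : nat) (f : nat -> R) : R :=
  match n with O => 0 | S k => Rsum k f + f k end.
Fixpoint Cprod (n : nat) (f : nat -> C) : C :=
  match n with O => 1%C | S k => (Cprod k f * f k)%C end.

Definition next (n l : nat) : nat := if Nat.eqb (S l) n then O else S l.

(** Tetrahedra A i (i < m) have vertices A i 0, .., A i 3.  The l-th member
    (l < n) of the cycle is the edge {va l, vb l} of A (idx l); its two faces
    containing the edge are {va,vb,vc} and {va,vb,vd}.  Face {va,vb,vd} of
    copy l is glued to face {va,vb,vc} of copy (next n l), va->va, vb->vb,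
    vd->vc; this gluing is realised by an isometry h l of H^3 that maps
    the face accordingly and puts A (idx l) on the other side of the face
    than A (idx (next n l)). *)
Definition vA (A : nat -> nat -> Pt) (idx v : nat -> nat) (l : nat) : Pt :=
  A (idx l) (v l).

(** The triangulation bestows a hyperbolic structure around the edge cycle:
    the copies can be developed in H^3 by isometries g l, consecutive copies
    sharing the glued face (pointwise, via the gluing) and lying on opposite
    sides of it, the development closing up (trivial holonomy: also copy n-1
    is glued to copy 0), and the developed tetrahedra fill the neighbourhood
    of the common edge exactly once (dihedral angles sum to 2 PI). *)
Definition hyp_structure_around (A : nat -> nat -> Pt) (n : nat)
    (idx va vb vc vd : nat -> nat) : Prop :=
  exists g : nat -> isom,
    (forall l, (l < n)%nat -> isom_ok (g l)) /\
    (forall l, (l < n)%nat ->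
       let l' := next n l in
       same_pt (act (g l) (vA A idx va l)) (act (g l') (vA A idx va l')) /\
       same_pt (act (g l) (vA A idx vb l)) (act (g l') (vA A idx vb l')) /\
       same_pt (act (g l) (vA A idx vd l)) (act (g l') (vA A idx vc l')) /\
       opposite_sides (act (g l') (vA A idx va l')) (act (g l') (vA A idx vb l'))
         (act (g l') (vA A idx vc l'))
         (act (g l) (vA A idx vc l)) (act (g l') (vA A idx vd l'))) /\
    Rsum n (fun l => dihedral (vA A idx va l) (vA A idx vb l)
                              (vA A idx vc l) (vA A idx vd l)) = 2 * PI.

From Stdlib Require Import Reals Arith Lra Lia Classical.
From Coquelicot Require Import Coquelicot.
Open Scope R_scope.

(** Develop the copies of the tetrahedra around the edge in H^3: undoing the gluing maps places
    copy [l+1] across the face it shares with copy [l].  By the choice of [eps] the developing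
    isometry of copy [l] preserves orientation exactly when [eps l] holds, so the developed cross
    ratio of copy [l] is [z_l] or its conjugate accordingly.  Consecutive developed copies lie on
    opposite sides of their common face, which puts all developed cross ratios in the same
    half-plane; hence the product in the statement is their product or its inverse.  Sending the
    common edge to [0, oo], each developed cross ratio is the quotient of the coordinates of the
    two free vertices of its copy, so the product telescopes and equals [1] exactly when the
    development closes up.  Finally the dihedral angle at the edge is the argument of the edge
    invariant. *)

Lemma Cmult_integral (a b : C) : (a * b)%C = 0%C -> a = 0%C \/ b = 0%C.
Proof.
  intros E. apply (f_equal Cmod) in E. rewrite Cmod_mult, Cmod_0 in E.
  destruct (Rmult_integral _ _ E); [left | right]; apply Cmod_eq_0; assumption.
Qed.

Lemma Cmult_neq_0 (a b : C) : a <> 0%C -> b <> 0%C -> (a * b)%C <> 0%C.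
Proof. intros Ha Hb E. destruct (Cmult_integral _ _ E); auto. Qed.

Lemma Cinv_neq_0 (z : C) : z <> 0%C -> (/ z)%C <> 0%C.
Proof.
  intros Hz E. pose proof (Cinv_r z Hz) as H. rewrite E, Cmult_0_r in H.
  apply (f_equal fst) in H. simpl in H. lra.
Qed.

Lemma Cconj_neq_0 (z : C) : z <> 0%C -> Cconj z <> 0%C.
Proof. intros Hz E. apply Hz, Cmod_eq_0. rewrite <- Cmod_conj, E. apply Cmod_0. Qed.

Lemma Cinv_0 : (/ 0)%C = 0%C.
Proof. unfold Cinv; simpl. apply injective_projections; simpl; unfold Rdiv; lra. Qed.

Lemma Cconj_0 : Cconj 0%C = 0%C.
Proof. unfold Cconj; simpl. apply injective_projections; simpl; lra. Qed.

Lemma Cconj_1 : Cconj 1%C = 1%C.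
Proof. unfold Cconj; simpl. apply injective_projections; simpl; lra. Qed.

Lemma Cinv_mult (a b : C) : (/ (a * b))%C = (/ a * / b)%C.
Proof.
  destruct (classic (a = 0%C)) as [-> | Ha].
  { rewrite Cmult_0_l, Cinv_0. ring. }
  destruct (classic (b = 0%C)) as [-> | Hb].
  { rewrite Cmult_0_r, Cinv_0. ring. }
  field. auto.
Qed.

Lemma Cdiv_mult_cancel_l (k x y : C) : k <> 0%C -> ((k * x) / (k * y) = x / y)%C.
Proof.
  intros Hk. unfold Cdiv. rewrite Cinv_mult.
  transitivity (x * / y * (k * / k))%C; [ring | rewrite Cinv_r by exact Hk; ring].
Qed.

Lemma Cinv_eq_1 (z : C) : (/ z)%C = 1%C -> z = 1%C.
Proof.
  intros H. destruct (classic (z = 0%C)) as [-> | Hz].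
  - rewrite Cinv_0 in H. apply (f_equal fst) in H. simpl in H. lra.
  - replace z with (/ / z)%C by (field; exact Hz). rewrite H. field.
Qed.

Lemma Cconj_eq_1 (z : C) : Cconj z = 1%C -> z = 1%C.
Proof. intros H. rewrite <- (Cconj_conj z), H. apply Cconj_1. Qed.

Lemma Im_Cinv_mul_Im (z : C) : Im z <> 0 -> Im (/ z) * Im z < 0.
Proof.
  destruct z as [x y]. unfold Im, Cinv; cbn [fst snd]. intros Hy.
  assert (0 < x ^ 2 + y ^ 2) by nra.
  assert (0 < / (x ^ 2 + y ^ 2)) by (apply Rinv_0_lt_compat; lra).
  assert (0 < y * y) by nra.
  replace (- y / (x ^ 2 + y ^ 2) * y) with (- (y * y) * / (x ^ 2 + y ^ 2)) by (field; lra).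
  nra.
Qed.

Lemma Im_Cinv_neq_0 (z : C) : Im z <> 0 -> Im (/ z) <> 0.
Proof. intros Hz E. pose proof (Im_Cinv_mul_Im z Hz) as H. rewrite E in H. lra. Qed.

Definition conj_if (r : bool) (z : C) : C := if r then Cconj z else z.

Lemma conj_if_mult r (x y : C) : conj_if r (x * y) = (conj_if r x * conj_if r y)%C.
Proof. destruct r; simpl; auto using Cmult_conj. Qed.

Lemma conj_if_inv r (x : C) : conj_if r (/ x) = (/ conj_if r x)%C.
Proof.
  destruct r; simpl; [|reflexivity].
  destruct (classic (x = 0%C)) as [-> | Hx]; [|apply Cinv_conj, Hx].
  rewrite Cinv_0, Cconj_0, Cinv_0. reflexivity.
Qed.

Lemma conj_if_div r (x y : C) : conj_if r (x / y) = (conj_if r x / conj_if r y)%C.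
Proof. unfold Cdiv. rewrite conj_if_mult, conj_if_inv. reflexivity. Qed.

Lemma conj_if_neq_0 r (x : C) : x <> 0%C -> conj_if r x <> 0%C.
Proof. destruct r; simpl; auto using Cconj_neq_0. Qed.

Lemma Im_conj_if r (x : C) : Im (conj_if r x) = if r then - Im x else Im x.
Proof. destruct r; simpl; auto. Qed.

Definition smul (k : C) (p : Pt) : Pt := ((k * fst p)%C, (k * snd p)%C).

Lemma det2_smul_l k p q : det2 (smul k p) q = (k * det2 p q)%C.
Proof. unfold det2, smul; simpl. ring. Qed.

Lemma det2_smul_r k p q : det2 p (smul k q) = (k * det2 p q)%C.
Proof. unfold det2, smul; simpl. ring. Qed.

Lemma det2_swap p q : det2 q p = (- det2 p q)%C.
Proof. unfold det2. ring. Qed.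

Lemma same_pt_refl p : same_pt p p.
Proof. unfold same_pt, det2. ring. Qed.

Lemma same_pt_sym p q : same_pt p q -> same_pt q p.
Proof. unfold same_pt. intros H. rewrite det2_swap, H. ring. Qed.

Lemma not_same_pt_sym p q : ~ same_pt p q -> ~ same_pt q p.
Proof. intros H E. apply H, same_pt_sym, E. Qed.

Lemma same_pt_trans p q r : nonzero_pt q -> same_pt p q -> same_pt q r -> same_pt p r.
Proof.
  unfold same_pt, nonzero_pt. intros Hq Hpq Hqr.
  assert (E1 : (fst q * det2 p r = fst p * det2 q r + fst r * det2 p q)%C) by (unfold det2; ring).
  assert (E2 : (snd q * det2 p r = snd p * det2 q r + snd r * det2 p q)%C) by (unfold det2; ring).
  rewrite Hpq, Hqr, Cmult_0_r, Cmult_0_r, Cplus_0_l in E1, E2.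
  destruct Hq as [Hq | Hq]; [destruct (Cmult_integral _ _ E1) | destruct (Cmult_integral _ _ E2)];
    tauto.
Qed.

Lemma not_same_pt_congr p q r : nonzero_pt r -> ~ same_pt p q -> same_pt q r -> ~ same_pt p r.
Proof. intros Hr H1 H2 H3. apply H1, (same_pt_trans p r q); auto using same_pt_sym. Qed.

Lemma same_pt_eq_smul p q : nonzero_pt p -> nonzero_pt q -> same_pt p q ->
  exists k : C, k <> 0%C /\ q = smul k p.
Proof.
  destruct p as [p1 p2], q as [q1 q2]. unfold same_pt, det2, nonzero_pt, smul; simpl.
  intros Hp Hq H.
  assert (H0 : (p1 * q2 = p2 * q1)%C).
  { replace (p1 * q2)%C with (p1 * q2 - p2 * q1 + p2 * q1)%C by ring. rewrite H. ring. }
  enough (exists k, q1 = (k * p1)%C /\ q2 = (k * p2)%C) as (k & E1 & E2).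
  { exists k. split; [| rewrite <- E1, <- E2; reflexivity].
    intros ->. destruct Hq as [Hq | Hq]; apply Hq; [rewrite E1 | rewrite E2]; ring. }
  destruct Hp as [Hp | Hp]; [exists (q1 / p1)%C | exists (q2 / p2)%C]; split.
  - field. exact Hp.
  - transitivity (p1 * q2 / p1)%C; [field | rewrite H0; field]; exact Hp.
  - transitivity (p2 * q1 / p2)%C; [field | rewrite <- H0; field]; exact Hp.
  - field. exact Hp.
Qed.

Lemma cr_smul (ka kb kc kd : C) a b c d :
  ka <> 0%C -> kb <> 0%C -> kc <> 0%C -> kd <> 0%C ->
  cr (smul ka a) (smul kb b) (smul kc c) (smul kd d) = cr a b c d.
Proof.
  intros. unfold cr. rewrite !det2_smul_l, !det2_smul_r.
  rewrite <- (Cdiv_mult_cancel_l (ka * kb * kc * kd) (det2 d a * det2 c b))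
    by (repeat apply Cmult_neq_0; assumption).
  unfold Cdiv. f_equal; [| f_equal]; ring.
Qed.

Lemma cr_congr a b c d a' b' c' d' :
  nonzero_pt a -> nonzero_pt b -> nonzero_pt c -> nonzero_pt d ->
  nonzero_pt a' -> nonzero_pt b' -> nonzero_pt c' -> nonzero_pt d' ->
  same_pt a a' -> same_pt b b' -> same_pt c c' -> same_pt d d' ->
  cr a' b' c' d' = cr a b c d.
Proof.
  intros.
  destruct (same_pt_eq_smul a a') as [ka [? ->]]; auto.
  destruct (same_pt_eq_smul b b') as [kb [? ->]]; auto.
  destruct (same_pt_eq_smul c c') as [kc [? ->]]; auto.
  destruct (same_pt_eq_smul d d') as [kd [? ->]]; auto.
  apply cr_smul; auto.
Qed.

(** [edge_coord a b x] is the image of [x] under a Moebius map sending [a], [b] to [0], [oo]. *)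
Definition edge_coord (a b x : Pt) : C := (det2 x a / det2 x b)%C.

Lemma edge_coord_neq_0 a b x : ~ same_pt x a -> ~ same_pt x b -> edge_coord a b x <> 0%C.
Proof. intros Ha Hb. apply Cmult_neq_0; [exact Ha | apply Cinv_neq_0, Hb]. Qed.

Lemma cr_edge_coord a b c d : det2 c a <> 0%C -> det2 c b <> 0%C -> det2 d b <> 0%C ->
  cr a b c d = (edge_coord a b d / edge_coord a b c)%C.
Proof. intros. unfold cr, edge_coord. field. auto. Qed.

Lemma edge_coord_congr a b x x' : nonzero_pt x -> nonzero_pt x' -> same_pt x x' ->
  edge_coord a b x' = edge_coord a b x.
Proof.
  intros Hx Hx' Hxx'. destruct (same_pt_eq_smul x x') as [k [Hk ->]]; auto.
  unfold edge_coord. rewrite !det2_smul_l. apply Cdiv_mult_cancel_l, Hk.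
Qed.

Lemma edge_coord_inj a b x y : ~ same_pt a b -> det2 x b <> 0%C -> det2 y b <> 0%C ->
  edge_coord a b x = edge_coord a b y -> same_pt x y.
Proof.
  unfold edge_coord, same_pt. intros Hab Hx Hy E.
  assert (E2 : (det2 x y * det2 a b)%C = 0%C).
  { transitivity (det2 x b * det2 y b * (det2 x a / det2 x b - det2 y a / det2 y b))%C.
    - unfold det2. field. split; assumption.
    - rewrite E. ring. }
  destruct (Cmult_integral _ _ E2); tauto.
Qed.

Definition detI (g : isom) : C := (im_a g * im_d g - im_b g * im_c g)%C.

Lemma det2_act g p q :
  det2 (act g p) (act g q) = (detI g * conj_if (im_rev g) (det2 p q))%C.
Proof.
  unfold det2, act, detI, conj_if. destruct (im_rev g); simpl.
  - rewrite Cminus_conj, !Cmult_conj. ring.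
  - ring.
Qed.

Lemma act_same_pt g p q : same_pt p q -> same_pt (act g p) (act g q).
Proof.
  unfold same_pt. intros H. rewrite det2_act, H.
  destruct (im_rev g); simpl; [| ring].
  unfold Cconj, Cmult; simpl. apply injective_projections; simpl; ring.
Qed.

Lemma act_not_same_pt g p q : isom_ok g -> ~ same_pt p q -> ~ same_pt (act g p) (act g q).
Proof.
  unfold same_pt. intros Hg H. rewrite det2_act.
  apply Cmult_neq_0; [exact Hg | apply conj_if_neq_0, H].
Qed.

Lemma cr_act g a b c d : isom_ok g ->
  cr (act g a) (act g b) (act g c) (act g d) = conj_if (im_rev g) (cr a b c d).
Proof.
  intros Hg. unfold cr. rewrite !det2_act, conj_if_div, !conj_if_mult.
  symmetry. rewrite <- (Cdiv_mult_cancel_l (detI g * detI g)) by (apply Cmult_neq_0; exact Hg).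
  unfold Cdiv. f_equal; [| f_equal]; ring.
Qed.

Lemma opposite_sides_act g p q r x y : isom_ok g ->
  opposite_sides (act g p) (act g q) (act g r) (act g x) (act g y) <-> opposite_sides p q r x y.
Proof.
  intros Hg. unfold opposite_sides. rewrite !cr_act, !Im_conj_if by exact Hg.
  destruct (im_rev g); [split; intros; nra | reflexivity].
Qed.

Definition isom_id : isom := Isom 1%C 0%C 0%C 1%C false.

Definition isom_comp (g k : isom) : isom :=
  let r := conj_if (im_rev g) in
  Isom (im_a g * r (im_a k) + im_b g * r (im_c k))%C
       (im_a g * r (im_b k) + im_b g * r (im_d k))%C
       (im_c g * r (im_a k) + im_d g * r (im_c k))%C
       (im_c g * r (im_b k) + im_d g * r (im_d k))%C
       (xorb (im_rev g) (im_rev k)).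

(* If [g] is [w |-> M conj(w)], its inverse is [w |-> conj(M^-1) conj(w)]. *)
Definition isom_inv (g : isom) : isom :=
  let r := conj_if (im_rev g) in
  let D := detI g in
  Isom (r (im_d g / D)%C) (r (- im_b g / D)%C) (r (- im_c g / D)%C) (r (im_a g / D)%C) (im_rev g).

Lemma act_comp g k p : act (isom_comp g k) p = act g (act k p).
Proof.
  destruct g as [a b c d []], k as [a' b' c' d' []], p as [x y];
  unfold act, isom_comp, conj_if; simpl;
  rewrite ?Cplus_conj, ?Cmult_conj, ?Cconj_conj; f_equal; ring.
Qed.

Lemma act_inv g p : isom_ok g -> act (isom_inv g) (act g p) = p.
Proof.
  unfold isom_ok. intros Hg.
  destruct g as [a b c d []], p as [x y]; unfold act, isom_inv, detI, conj_if in *; simpl in *.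
  - assert (Hg' : (Cconj a * Cconj d - Cconj b * Cconj c)%C <> 0%C).
    { rewrite <- !Cmult_conj, <- Cminus_conj. apply Cconj_neq_0, Hg. }
    rewrite !Cdiv_conj, !Cplus_conj, !Cminus_conj, !Cmult_conj, !Copp_conj, !Cconj_conj by exact Hg.
    f_equal; field; exact Hg'.
  - f_equal; field; exact Hg.
Qed.

Lemma act_origin g : act g (RtoC 0, RtoC 0) = (RtoC 0, RtoC 0).
Proof. unfold act. destruct (im_rev g); simpl; rewrite ?Cconj_0; f_equal; ring. Qed.

Lemma act_nonzero_pt g p : isom_ok g -> nonzero_pt p -> nonzero_pt (act g p).
Proof.
  intros Hg Hp. apply NNPP. intros Hn.
  assert (E : act g p = (RtoC 0, RtoC 0)).
  { destruct (act g p) as [x y]. unfold nonzero_pt in Hn; simpl in Hn.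
    apply not_or_and in Hn as [Hx Hy]. apply NNPP in Hx, Hy. subst. reflexivity. }
  rewrite <- (act_inv g p Hg), E, act_origin in Hp. destruct Hp; auto.
Qed.

Lemma isom_ok_comp g k : isom_ok g -> isom_ok k -> isom_ok (isom_comp g k).
Proof.
  unfold isom_ok. intros Hg Hk.
  replace (_ - _)%C with (detI g * conj_if (im_rev g) (detI k))%C.
  - apply Cmult_neq_0; [exact Hg | apply conj_if_neq_0, Hk].
  - unfold isom_comp, detI, conj_if. destruct (im_rev g); simpl;
      rewrite ?Cminus_conj, ?Cmult_conj; ring.
Qed.

Lemma isom_ok_inv g : isom_ok g -> isom_ok (isom_inv g).
Proof.
  unfold isom_ok. intros Hg.
  replace (_ - _)%C with (conj_if (im_rev g) (/ detI g)).
  - apply conj_if_neq_0, Cinv_neq_0, Hg.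
  - unfold isom_inv, conj_if, detI in *. destruct (im_rev g); simpl;
      rewrite <- ?Cmult_conj, <- ?Cminus_conj; [f_equal |]; field; exact Hg.
Qed.

Lemma cr_swap_ab a b c d :
  det2 d a <> 0%C -> det2 c b <> 0%C -> det2 d b <> 0%C -> det2 c a <> 0%C ->
  cr b a c d = (/ cr a b c d)%C.
Proof. intros. unfold cr. field. auto. Qed.

Lemma cr_swap_cd a b c d :
  det2 d a <> 0%C -> det2 c b <> 0%C -> det2 d b <> 0%C -> det2 c a <> 0%C ->
  cr a b d c = (/ cr a b c d)%C.
Proof. intros. unfold cr. field. auto. Qed.

Lemma cr_swap_ac a b c d : det2 d b <> 0%C -> det2 c a <> 0%C ->
  cr c b a d = (1 - cr a b c d)%C.
Proof.
  intros. unfold cr. rewrite (det2_swap b a), (det2_swap c a).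
  replace (det2 d c * - det2 b a)%C with (det2 d a * det2 c b - det2 d b * det2 c a)%C
    by (unfold det2; ring).
  field. auto.
Qed.

Lemma ideal_tetra_swap_ab a b c d : ideal_tetra a b c d -> ideal_tetra b a c d.
Proof.
  intros (? & ? & ? & ? & ? & ? & ? & ? & ? & ? & Him).
  repeat split; auto using not_same_pt_sym.
  rewrite cr_swap_ab by (apply not_same_pt_sym; assumption). apply Im_Cinv_neq_0, Him.
Qed.

Lemma ideal_tetra_swap_cd a b c d : ideal_tetra a b c d -> ideal_tetra a b d c.
Proof.
  intros (? & ? & ? & ? & ? & ? & ? & ? & ? & ? & Him).
  repeat split; auto using not_same_pt_sym.
  rewrite cr_swap_cd by (apply not_same_pt_sym; assumption). apply Im_Cinv_neq_0, Him.
Qed.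

Lemma ideal_tetra_swap_ac a b c d : ideal_tetra a b c d -> ideal_tetra c b a d.
Proof.
  intros (? & ? & ? & ? & ? & ? & ? & ? & ? & ? & Him).
  repeat split; auto using not_same_pt_sym.
  rewrite cr_swap_ac by (apply not_same_pt_sym; assumption).
  destruct (cr a b c d) as [x y]. simpl in *. lra.
Qed.

Lemma ideal_tetra_perm (f : nat -> Pt) i j k l :
  ideal_tetra (f 0%nat) (f 1%nat) (f 2%nat) (f 3%nat) ->
  (i < 4)%nat -> (j < 4)%nat -> (k < 4)%nat -> (l < 4)%nat ->
  i <> j -> i <> k -> i <> l -> j <> k -> j <> l -> k <> l ->
  ideal_tetra (f i) (f j) (f k) (f l).
Proof.
  intros H0 **.
  destruct i as [|[|[|[|i]]]]; try lia; destruct j as [|[|[|[|j]]]]; try lia;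
  destruct k as [|[|[|[|k]]]]; try lia; destruct l as [|[|[|[|l]]]]; try lia;
  eauto 8 using ideal_tetra_swap_ab, ideal_tetra_swap_cd, ideal_tetra_swap_ac.
Qed.

Lemma ideal_tetra_act g a b c d : isom_ok g -> ideal_tetra a b c d ->
  ideal_tetra (act g a) (act g b) (act g c) (act g d).
Proof.
  intros Hg (? & ? & ? & ? & ? & ? & ? & ? & ? & ? & Him).
  repeat split; auto using act_nonzero_pt, act_not_same_pt.
  rewrite cr_act, Im_conj_if by exact Hg. destruct (im_rev g); lra.
Qed.

Lemma Re_div_Cmod (u v : C) : u <> 0%C -> v <> 0%C ->
  Re (u / v) / Cmod (u / v) = Re (u * Cconj v) / (Cmod u * Cmod v).
Proof.
  intros Hu Hv. rewrite Cmod_div by exact Hv.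
  assert (Hv2 : Cmod v * Cmod v = fst v ^ 2 + snd v ^ 2) by (apply sqrt_sqrt; nra).
  apply Cmod_gt_0 in Hu. pose proof (proj1 (Cmod_gt_0 v) Hv) as Hv0.
  replace (Re (u / v)) with (Re (u * Cconj v) / (Cmod v * Cmod v)).
  - field. lra.
  - rewrite Hv2. destruct u as [u1 u2], v as [v1 v2]. simpl in *.
    unfold Cdiv, Cinv, Cmult, Cconj; simpl. field. nra.
Qed.

Lemma dihedral_arg a b c d : ideal_tetra a b c d -> dihedral a b c d = arg (edge_inv a b c d).
Proof.
  intros (? & ? & ? & ? & Hab & Hac & Had & Hbc & Hbd & Hcd & Him).
  unfold dihedral, edge_inv, arg. cbv zeta.
  fold (edge_coord a b c) (edge_coord a b d).
  set (p := edge_coord a b c). set (q := edge_coord a b d).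
  assert (Hp : p <> 0%C).
  { apply Cmult_neq_0; [| apply Cinv_neq_0]; apply not_same_pt_sym; assumption. }
  assert (Hq : q <> 0%C).
  { apply Cmult_neq_0; [| apply Cinv_neq_0]; apply not_same_pt_sym; assumption. }
  rewrite cr_edge_coord in * by (apply not_same_pt_sym; assumption). fold p q in Him |- *.
  destruct (Rlt_dec 0 (Im (q / p))) as [Hpos | Hneg].
  - destruct (Rle_dec 0 (Im (q / p))) as [_ | ?]; [| lra].
    f_equal. rewrite Re_div_Cmod by assumption.
    destruct p, q; simpl. f_equal; [ring | apply Rmult_comm].
  - pose proof (Im_Cinv_mul_Im (q / p) Him) as Hinv.
    replace (/ (q / p))%C with (p / q)%C in * by (field; auto).
    destruct (Rle_dec 0 (Im (p / q))) as [_ | ?]; [| nra].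
    f_equal. rewrite Re_div_Cmod by assumption. reflexivity.
Qed.

Lemma Cprod_ext n (f g : nat -> C) : (forall l, (l < n)%nat -> f l = g l) -> Cprod n f = Cprod n g.
Proof. induction n; simpl; intros H; auto. rewrite IHn, H; auto. Qed.

Lemma Rsum_ext n (f g : nat -> R) : (forall l, (l < n)%nat -> f l = g l) -> Rsum n f = Rsum n g.
Proof. induction n; simpl; intros H; auto. rewrite IHn, H; auto. Qed.

Lemma Cprod_inv n (f : nat -> C) : Cprod n (fun l => / f l)%C = (/ Cprod n f)%C.
Proof. induction n; simpl; [field | rewrite IHn, Cinv_mult; reflexivity]. Qed.

Lemma Cprod_conj n (f : nat -> C) : Cprod n (fun l => Cconj (f l)) = Cconj (Cprod n f).
Proof. induction n; simpl; [symmetry; apply Cconj_1 | rewrite IHn, Cmult_conj; reflexivity]. Qed.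

Lemma Cprod_telescope n (u v : nat -> C) : (0 < n)%nat ->
  (forall l, (l < n)%nat -> u l <> 0%C) -> (forall l, (S l < n)%nat -> v l = u (S l)) ->
  Cprod n (fun l => v l / u l)%C = (v (pred n) / u 0%nat)%C.
Proof.
  induction n as [|[|n] IH]; intros Hn Hu Hv; [lia | simpl; ring |].
  change (Cprod (S (S n)) (fun l => v l / u l)%C)
    with (Cprod (S n) (fun l => v l / u l)%C * (v (S n) / u (S n)))%C.
  rewrite IH by (lia || (intros; apply Hu; lia) || (intros; apply Hv; lia)).
  simpl. rewrite (Hv n) by lia. field. split; apply Hu; lia.
Qed.

Definition glued (a b c d a' b' c' d' : Pt) : Prop :=
  same_pt a a' /\ same_pt b b' /\ same_pt d c' /\ opposite_sides a' b' c' c d'.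

Lemma glued_act g a b c d a' b' c' d' : isom_ok g ->
  glued a b c d a' b' c' d' ->
  glued (act g a) (act g b) (act g c) (act g d) (act g a') (act g b') (act g c') (act g d').
Proof.
  intros Hg (Ha & Hb & Hd & Hopp).
  repeat split; try apply act_same_pt; try apply opposite_sides_act; assumption.
Qed.

Lemma opposite_sides_iff_Im_cr a b c d a' b' c' d' :
  ideal_tetra a b c d -> ideal_tetra a' b' c' d' ->
  same_pt a a' -> same_pt b b' -> same_pt d c' ->
  opposite_sides a' b' c' c d' <-> 0 < Im (cr a b c d) * Im (cr a' b' c' d').
Proof.
  intros (? & ? & ? & ? & ? & ? & ? & ? & ? & ? & Him) (? & ? & ? & ? & _) Ha Hb Hd.
  unfold opposite_sides.
  rewrite (cr_congr a b d c a' b' c' c), cr_swap_cd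
    by (assumption || apply same_pt_refl || (apply not_same_pt_sym; assumption)).
  pose proof (Im_Cinv_mul_Im _ Him).
  destruct (Rlt_or_le 0 (Im (/ cr a b c d))); split; intros; nra.
Qed.

Definition Im_coherent (n : nat) (w : nat -> C) : Prop :=
  forall l, (l < n)%nat -> 0 < Im (w l) * Im (w 0%nat).

Section Chain.

Variables (n : nat) (a b c d : nat -> Pt).
Hypothesis chain_tetra : forall l, (l < n)%nat -> ideal_tetra (a l) (b l) (c l) (d l).
Hypothesis chain_glued : forall l, (S l < n)%nat ->
  glued (a l) (b l) (c l) (d l) (a (S l)) (b (S l)) (c (S l)) (d (S l)).

Lemma chain_common_edge l : (l < n)%nat -> same_pt (a l) (a 0%nat) /\ same_pt (b l) (b 0%nat).
Proof.
  induction l as [|l IH]; intros Hl; [split; apply same_pt_refl |].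
  destruct IH as [Ha Hb]; [lia |].
  destruct (chain_glued l Hl) as (Ha' & Hb' & _).
  destruct (chain_tetra l ltac:(lia)) as (? & ? & _).
  split; [apply (same_pt_trans _ (a l)) | apply (same_pt_trans _ (b l))];
    auto using same_pt_sym.
Qed.

Lemma chain_Im_coherent : Im_coherent n (fun l => cr (a l) (b l) (c l) (d l)).
Proof.
  intros l. induction l as [|l IH]; intros Hl.
  - destruct (chain_tetra 0 Hl) as (_ & _ & _ & _ & _ & _ & _ & _ & _ & _ & Him).
    destruct (Rlt_or_le 0 (Im (cr (a 0%nat) (b 0%nat) (c 0%nat) (d 0%nat)))); nra.
  - destruct (chain_glued l Hl) as (Ha & Hb & Hd & Hopp).
    apply (opposite_sides_iff_Im_cr (a l) (b l) (c l) (d l)) in Hopp; auto with arith.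
    specialize (IH ltac:(lia)). nra.
Qed.

Lemma chain_apart l : (l < n)%nat ->
  ~ same_pt (c l) (a 0%nat) /\ ~ same_pt (c l) (b 0%nat) /\
  ~ same_pt (d l) (a 0%nat) /\ ~ same_pt (d l) (b 0%nat).
Proof.
  intros Hl. destruct (chain_common_edge l Hl) as [Ha Hb].
  destruct (chain_tetra l Hl) as (? & ? & ? & ? & ? & ? & ? & ? & ? & ? & _).
  destruct (chain_tetra 0 ltac:(lia)) as (? & ? & _).
  repeat split; [apply (not_same_pt_congr _ (a l)) | apply (not_same_pt_congr _ (b l))
                | apply (not_same_pt_congr _ (a l)) | apply (not_same_pt_congr _ (b l))];
    auto using not_same_pt_sym.
Qed.

Lemma chain_prod_cr : (0 < n)%nat ->
  Cprod n (fun l => cr (a l) (b l) (c l) (d l)) =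
  (edge_coord (a 0%nat) (b 0%nat) (d (pred n)) / edge_coord (a 0%nat) (b 0%nat) (c 0%nat))%C.
Proof.
  intros Hn. set (e := edge_coord (a 0%nat) (b 0%nat)).
  rewrite (Cprod_ext n _ (fun l => e (d l) / e (c l))%C).
  - apply Cprod_telescope; [exact Hn | |].
    + intros l Hl. destruct (chain_apart l Hl) as (Hca & Hcb & _).
      apply edge_coord_neq_0; assumption.
    + intros l Hl. destruct (chain_glued l Hl) as (_ & _ & Hd & _).
      destruct (chain_tetra l ltac:(lia)) as (_ & _ & _ & ? & _).
      destruct (chain_tetra (S l) Hl) as (_ & _ & ? & _).
      symmetry. apply edge_coord_congr; assumption.
  - intros l Hl. destruct (chain_common_edge l Hl) as [Ha Hb].
    destruct (chain_apart l Hl) as (Hca & Hcb & Hda & Hdb).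
    destruct (chain_tetra l Hl) as (? & ? & ? & ? & _).
    destruct (chain_tetra 0 Hn) as (? & ? & _).
    rewrite <- (cr_congr (a l) (b l) (c l) (d l) (a 0%nat) (b 0%nat) (c l) (d l))
      by (assumption || apply same_pt_refl).
    apply cr_edge_coord; assumption.
Qed.

Lemma chain_closes_iff : (0 < n)%nat ->
  glued (a (pred n)) (b (pred n)) (c (pred n)) (d (pred n)) (a 0%nat) (b 0%nat) (c 0%nat) (d 0%nat)
  <-> Cprod n (fun l => cr (a l) (b l) (c l) (d l)) = 1%C.
Proof.
  intros Hn. assert (Hlast : (pred n < n)%nat) by lia.
  destruct (chain_apart 0 Hn) as (Hca & Hcb & _).
  destruct (chain_apart (pred n) Hlast) as (_ & _ & Hda & Hdb).
  pose proof (chain_tetra 0 Hn) as T0. pose proof (chain_tetra (pred n) Hlast) as Tl.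
  pose proof (edge_coord_neq_0 _ _ _ Hca Hcb) as Hc0.
  rewrite chain_prod_cr by exact Hn. split.
  - intros (_ & _ & Hd & _). destruct T0 as (_ & _ & ? & _). destruct Tl as (_ & _ & _ & ? & _).
    rewrite (edge_coord_congr _ _ (c 0%nat) (d (pred n))) by auto using same_pt_sym.
    field. exact Hc0.
  - intros Hprod. destruct (chain_common_edge _ Hlast) as [Ha Hb].
    assert (Hd : same_pt (d (pred n)) (c 0%nat)).
    { destruct T0 as (_ & _ & _ & _ & Hab & _).
      apply (edge_coord_inj (a 0%nat) (b 0%nat)); [assumption .. |].
      set (e := edge_coord (a 0%nat) (b 0%nat)) in *.
      transitivity (e (d (pred n)) / e (c 0%nat) * e (c 0%nat))%C; [field; exact Hc0 |].
      rewrite Hprod. ring. }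
    refine (conj Ha (conj Hb (conj Hd _))).
    apply (opposite_sides_iff_Im_cr (a (pred n)) (b (pred n)) (c (pred n)) (d (pred n)));
      [assumption .. |].
    apply (chain_Im_coherent _ Hlast).
Qed.

End Chain.

(* [edge_inv a b c d] unfolds to [upper (cr a b c d)]. *)
Definition upper (z : C) : C := if Rlt_dec 0 (Im z) then z else (/ z)%C.

Lemma Cprod_upper_eq_1 n s : Im_coherent n s ->
  Cprod n (fun l => upper (s l)) = 1%C <-> Cprod n s = 1%C.
Proof.
  intros Hs. destruct (Rlt_dec 0 (Im (s 0%nat))) as [Hpos | Hnpos].
  - rewrite (Cprod_ext n _ s); [reflexivity |].
    intros l Hl. specialize (Hs l Hl). unfold upper. destruct Rlt_dec; [reflexivity | nra].
  - rewrite (Cprod_ext n _ (fun l => / s l)%C), Cprod_inv.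
    + split; [apply Cinv_eq_1 | intros ->; field].
    + intros l Hl. specialize (Hs l Hl). unfold upper. destruct Rlt_dec; [nra | reflexivity].
Qed.

Lemma Cprod_eq_1_coherent n w s : Im_coherent n w -> Im_coherent n s ->
  (forall l, (l < n)%nat -> w l = s l \/ w l = Cconj (s l)) ->
  Cprod n w = 1%C -> Cprod n s = 1%C.
Proof.
  intros Hw Hs Hws Hprod.
  destruct (Rlt_or_le 0 (Im (w 0%nat) * Im (s 0%nat))) as [Hpos | Hneg].
  - rewrite <- Hprod. apply Cprod_ext. intros l Hl.
    specialize (Hw l Hl). specialize (Hs l Hl).
    destruct (Hws l Hl) as [E | E]; rewrite E in *; [reflexivity |].
    rewrite im_conj in Hw. nra.
  - apply Cconj_eq_1. rewrite <- Cprod_conj, <- Hprod. apply Cprod_ext. intros l Hl.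
    specialize (Hw l Hl). specialize (Hs l Hl).
    destruct (Hws l Hl) as [E | E]; rewrite E in *; [nra | reflexivity].
Qed.

Lemma upper_conj_if (e : bool) (z : C) : Im z <> 0 ->
  (if e then upper z else / Cconj (upper z))%C = upper (conj_if (negb e) z).
Proof.
  intros Hz. assert (Hz0 : z <> 0%C) by (intros ->; apply Hz; reflexivity).
  unfold upper. rewrite Im_conj_if.
  destruct e; simpl; [reflexivity |].
  destruct (Rlt_dec 0 (Im z)), (Rlt_dec 0 (- Im z)); try lra.
  - reflexivity.
  - rewrite Cinv_conj by exact Hz0. field. apply Cconj_neq_0, Hz0.
Qed.

Lemma conj_if_cases r s (z : C) :
  conj_if r z = conj_if s z \/ conj_if r z = Cconj (conj_if s z).
Proof. destruct r, s; simpl; rewrite ?Cconj_conj; auto. Qed.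

Lemma next_S n l : (S l < n)%nat -> next n l = S l.
Proof. intros H. unfold next. destruct (Nat.eqb_spec (S l) n); [lia | reflexivity]. Qed.

Lemma next_pred n : (0 < n)%nat -> next n (pred n) = 0%nat.
Proof. intros H. unfold next. destruct (Nat.eqb_spec (S (pred n)) n); [reflexivity | lia]. Qed.

Section EdgeCycle.

Variables (m : nat) (A : nat -> nat -> Pt).
Hypothesis HA : forall i, (i < m)%nat ->
  ideal_tetra (A i 0%nat) (A i 1%nat) (A i 2%nat) (A i 3%nat).
Variable n : nat.
Hypothesis Hn : (0 < n)%nat.
Variables idx va vb vc vd : nat -> nat.
Hypothesis Hidx : forall l, (l < n)%nat -> (idx l < m)%nat.
Hypothesis Hlab : forall l, (l < n)%nat ->
  (va l < 4)%nat /\ (vb l < 4)%nat /\ (vc l < 4)%nat /\ (vd l < 4)%nat /\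
  va l <> vb l /\ va l <> vc l /\ va l <> vd l /\
  vb l <> vc l /\ vb l <> vd l /\ vc l <> vd l.
Variable h : nat -> isom.
Hypothesis Hglue : forall l, (l < n)%nat ->
  let l' := next n l in
  isom_ok (h l) /\
  same_pt (act (h l) (vA A idx va l)) (vA A idx va l') /\
  same_pt (act (h l) (vA A idx vb l)) (vA A idx vb l') /\
  same_pt (act (h l) (vA A idx vd l)) (vA A idx vc l') /\
  opposite_sides (vA A idx va l') (vA A idx vb l') (vA A idx vc l')
    (act (h l) (vA A idx vc l)) (vA A idx vd l').
Variable eps : nat -> bool.
Hypothesis Heps0 : eps 0%nat = true.
Hypothesis Heps : forall l, (l < n)%nat ->
  eps (next n l) = Bool.eqb (eps l) (orientation_preserving (h l)).

Local Notation a l := (vA A idx va l).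
Local Notation b l := (vA A idx vb l).
Local Notation c l := (vA A idx vc l).
Local Notation d l := (vA A idx vd l).

Lemma cycle_tetra l : (l < n)%nat -> ideal_tetra (a l) (b l) (c l) (d l).
Proof.
  intros Hl. destruct (Hlab l Hl) as (? & ? & ? & ? & ? & ? & ? & ? & ? & ?).
  apply (ideal_tetra_perm (A (idx l))); auto.
Qed.

Fixpoint develop (l : nat) : isom :=
  match l with O => isom_id | S k => isom_comp (develop k) (isom_inv (h k)) end.

Lemma develop_ok l : (l < n)%nat -> isom_ok (develop l) /\ im_rev (develop l) = negb (eps l).
Proof.
  induction l as [|l IH]; intros Hl; simpl.
  - split; [| rewrite Heps0; reflexivity].
    unfold isom_ok; simpl. intros E. apply (f_equal fst) in E. simpl in E. lra.
  - destruct IH as [Hok Hrev]; [lia |].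
    destruct (Hglue l ltac:(lia)) as [Hh _].
    pose proof (Heps l ltac:(lia)) as He. rewrite next_S in He by exact Hl.
    split; [apply isom_ok_comp, isom_ok_inv; assumption |].
    simpl. rewrite Hrev, He. unfold orientation_preserving.
    destruct (eps l), (im_rev (h l)); reflexivity.
Qed.

Definition dev_cr (g : nat -> isom) (l : nat) : C :=
  cr (act (g l) (a l)) (act (g l) (b l)) (act (g l) (c l)) (act (g l) (d l)).

Lemma dev_cr_conj_if g l : isom_ok (g l) ->
  dev_cr g l = conj_if (im_rev (g l)) (cr (a l) (b l) (c l) (d l)).
Proof. apply cr_act. Qed.

Lemma develop_glued l : (S l < n)%nat ->
  glued (act (develop l) (a l)) (act (develop l) (b l)) (act (develop l) (c l))
    (act (develop l) (d l))
    (act (develop (S l)) (a (S l))) (act (develop (S l)) (b (S l)))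
    (act (develop (S l)) (c (S l))) (act (develop (S l)) (d (S l))).
Proof.
  intros Hl. destruct (Hglue l ltac:(lia)) as [Hh Hgl]. cbv zeta in Hgl.
  rewrite next_S in Hgl by exact Hl.
  assert (Hback : forall x, act (develop (S l)) (act (h l) x) = act (develop l) x).
  { intros x. simpl. rewrite act_comp, act_inv by exact Hh. reflexivity. }
  rewrite <- !Hback. apply glued_act; [apply develop_ok, Hl | exact Hgl].
Qed.

Lemma developed_tetra g l : (l < n)%nat -> isom_ok (g l) ->
  ideal_tetra (act (g l) (a l)) (act (g l) (b l)) (act (g l) (c l)) (act (g l) (d l)).
Proof. intros Hl Hg. apply ideal_tetra_act; [exact Hg | apply cycle_tetra, Hl]. Qed.

Lemma develop_coherent : Im_coherent n (dev_cr develop).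
Proof.
  apply chain_Im_coherent; [| exact develop_glued].
  intros l Hl. apply developed_tetra, develop_ok; exact Hl.
Qed.

Lemma edge_inv_prod_iff :
  Cprod n (fun l =>
    let z := edge_inv (a l) (b l) (c l) (d l) in if eps l then z else Cinv (Cconj z)) = 1%C
  <-> Cprod n (dev_cr develop) = 1%C.
Proof.
  rewrite <- (Cprod_upper_eq_1 n _ develop_coherent).
  split; intros <-; apply Cprod_ext; intros l Hl;
    destruct (develop_ok l Hl) as [Hok Hrev];
    destruct (cycle_tetra l Hl) as (_ & _ & _ & _ & _ & _ & _ & _ & _ & _ & Him);
    rewrite dev_cr_conj_if, Hrev by exact Hok; cbv zeta;
    [symmetry |]; exact (upper_conj_if (eps l) _ Him).
Qed.

Lemma hyp_structure_prod :
  hyp_structure_around A n idx va vb vc vd -> Cprod n (dev_cr develop) = 1%C.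
Proof.
  intros (g & Hg & Hglued & _).
  assert (Htetra : forall l, (l < n)%nat ->
    ideal_tetra (act (g l) (a l)) (act (g l) (b l)) (act (g l) (c l)) (act (g l) (d l)))
    by (intros l Hl; apply developed_tetra, Hg; exact Hl).
  assert (Hchain : forall l, (S l < n)%nat ->
    glued (act (g l) (a l)) (act (g l) (b l)) (act (g l) (c l)) (act (g l) (d l))
      (act (g (S l)) (a (S l))) (act (g (S l)) (b (S l)))
      (act (g (S l)) (c (S l))) (act (g (S l)) (d (S l)))).
  { intros l Hl. pose proof (Hglued l ltac:(lia)) as G. cbv zeta in G.
    rewrite next_S in G by exact Hl. exact G. }
  apply (Cprod_eq_1_coherent n (dev_cr g)).
  - exact (chain_Im_coherent n _ _ _ _ Htetra Hchain).
  - exact develop_coherent.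
  - intros l Hl. rewrite !dev_cr_conj_if by (apply Hg, Hl || apply develop_ok, Hl).
    apply conj_if_cases.
  - apply (chain_closes_iff n _ _ _ _ Htetra Hchain Hn).
    pose proof (Hglued (pred n) ltac:(lia)) as G. cbv zeta in G.
    rewrite next_pred in G by exact Hn. exact G.
Qed.

Lemma prod_hyp_structure : Cprod n (dev_cr develop) = 1%C ->
  Rsum n (fun l => dihedral (a l) (b l) (c l) (d l)) = 2 * PI ->
  hyp_structure_around A n idx va vb vc vd.
Proof.
  intros Hprod Hsum. exists develop.
  split; [intros l Hl; apply develop_ok, Hl |]. split; [| exact Hsum].
  intros l Hl. cbv zeta. destruct (Nat.lt_ge_cases (S l) n) as [HSl | HSl].
  - rewrite next_S by exact HSl. apply develop_glued, HSl.
  - replace l with (pred n) by lia. rewrite next_pred by exact Hn.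
    refine (proj2 (chain_closes_iff n (fun k => act (develop k) (a k))
      (fun k => act (develop k) (b k)) (fun k => act (develop k) (c k))
      (fun k => act (develop k) (d k)) _ develop_glued Hn) Hprod).
    intros k Hk. apply developed_tetra, develop_ok; exact Hk.
Qed.

Lemma hyp_structure_around_iff :
  hyp_structure_around A n idx va vb vc vd <->
  (Cprod n (fun l =>
      let z := edge_inv (a l) (b l) (c l) (d l) in if eps l then z else Cinv (Cconj z)) = 1%C /\
   Rsum n (fun l => arg (edge_inv (a l) (b l) (c l) (d l))) = 2 * PI).
Proof.
  rewrite edge_inv_prod_iff.
  rewrite <- (Rsum_ext n (fun l => dihedral (a l) (b l) (c l) (d l)))
    by (intros l Hl; apply dihedral_arg, cycle_tetra, Hl).
  split.
  - intros Hs. split; [exact (hyp_structure_prod Hs) |].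
    destruct Hs as (_ & _ & _ & Hsum). exact Hsum.
  - intros [Hprod Hsum]. exact (prod_hyp_structure Hprod Hsum).
Qed.

End EdgeCycle.

Theorem proposition2p2
  (m : nat) (A : nat -> nat -> Pt)
  (HA : forall i, (i < m)%nat -> ideal_tetra (A i 0%nat) (A i 1%nat) (A i 2%nat) (A i 3%nat))
  (n : nat) (Hn : (0 < n)%nat)
  (idx va vb vc vd : nat -> nat)
  (Hidx : forall l, (l < n)%nat -> (idx l < m)%nat)
  (Hlab : forall l, (l < n)%nat ->
     (va l < 4)%nat /\ (vb l < 4)%nat /\ (vc l < 4)%nat /\ (vd l < 4)%nat /\
     va l <> vb l /\ va l <> vc l /\ va l <> vd l /\
     vb l <> vc l /\ vb l <> vd l /\ vc l <> vd l)
  (Hdistinct : forall l1 l2, (l1 < n)%nat -> (l2 < n)%nat -> l1 <> l2 ->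
     idx l1 <> idx l2 \/
     ~ ((va l1 = va l2 /\ vb l1 = vb l2) \/ (va l1 = vb l2 /\ vb l1 = va l2)))
  (h : nat -> isom)
  (Hglue : forall l, (l < n)%nat ->
     let l' := next n l in
     isom_ok (h l) /\
     same_pt (act (h l) (vA A idx va l)) (vA A idx va l') /\
     same_pt (act (h l) (vA A idx vb l)) (vA A idx vb l') /\
     same_pt (act (h l) (vA A idx vd l)) (vA A idx vc l') /\
     opposite_sides (vA A idx va l') (vA A idx vb l') (vA A idx vc l')
       (act (h l) (vA A idx vc l)) (vA A idx vd l'))
  (eps : nat -> bool)
  (Heps0 : eps 0%nat = true)
  (Heps : forall l, (l < n)%nat ->
     eps (next n l) = Bool.eqb (eps l) (orientation_preserving (h l))) :
  hyp_structure_around A n idx va vb vc vd <->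
  (Cprod n (fun l =>
      let z := edge_inv (vA A idx va l) (vA A idx vb l) (vA A idx vc l) (vA A idx vd l) in
      if eps l then z else Cinv (Cconj z)) = 1%C /\
   Rsum n (fun l =>
      arg (edge_inv (vA A idx va l) (vA A idx vb l) (vA A idx vc l) (vA A idx vd l)))
     = 2 * PI).
Proof.
  exact (hyp_structure_around_iff m A HA n Hn idx va vb vc vd Hidx Hlab h Hglue eps Heps0 Heps).
Qed.
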